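(* For all $n\ge 0$ and $k\ge 0$: if $k\equiv 0$ or $3\pmod 4$ then $L(n,k)=e(n,k)$, and if $k\equiv 1$ or $2\pmod 4$ then $L(n,k)=o(n,k)$.
   Context: $e(n,k)$ (resp. $o(n,k)$) is the number of $k$-element subsets of $\{1,\dots,n\}$ whose sum of elements is even (resp. odd); the empty set counts as even. Losanitsch's triangle $(L(n,k))_{n,k\ge 0}$ is defined by $L(0,k)=[k=0]$, $L(1,k)=[k\le 1]$ for $k\ge0$, $L(n,k)=0$ for $k<0$, and for $n\ge 2$ and all $k$: $L(n,k)=L(n-2,k)+\binom{n-2}{k-1}+L(n-2,k-2)$, where $\binom{m}{j}=0$ for $j<0$ or $j>m$. *)

From mathcomp Require Import all_boot.
Set Implicit Arguments. Unset Strict Implicit. Unset Printing Implicit Defensive.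

(* Elements of {1,...,n} are represented by i : 'I_n standing for i+1. *)
Definition subset_sum n (A : {set 'I_n}) : nat := \sum_(i in A) i.+1.

Definition e_cnt (n k : nat) : nat :=
  #|[set A : {set 'I_n} | (#|A| == k) && ~~ odd (subset_sum A)]|.

Definition o_cnt (n k : nat) : nat :=
  #|[set A : {set 'I_n} | (#|A| == k) && odd (subset_sum A)]|.

Fixpoint losanitsch (n k : nat) {struct n} : nat :=
  match n with
  | 0 => (k == 0)
  | 1 => (k <= 1)
  | m.+2 =>
      losanitsch m k
      + (if k is k'.+1 then 'C(m, k') else 0)
      + (if k is k''.+2 then losanitsch m k'' else 0)
  end.

From mathcomp Require Import all_boot.

(* Classify the k-subsets of {1..n+1} by whether they contain n+1: this gives
   c(n+1,k,b) = c(n,k,b) + c(n,k-1,b + (n+1)) for the number c(n,k,b) of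
   k-subsets with sum of parity b.  Applying it twice, the two middle terms
   have opposite parities since n+1 and n+2 do, so they add up to C(n,k-1), and
   the last one counts (k-2)-subsets of the opposite parity.  Hence
   c(n,k,p_k) satisfies Losanitsch's recurrence as soon as p_(k+2) = ~~ p_k,
   which is the case for p_k = [k = 1 or 2 (mod 4)]; the initial values agree. *)

Definition parity_cnt (n k : nat) (b : bool) : nat :=
  #|[set A : {set 'I_n} | (#|A| == k) && (odd (subset_sum A) == b)]|.

Lemma card_set_sum (T : finType) (P : pred T) : #|[set x | P x]| = \sum_x P x.
Proof.
by rewrite -sum1_card big_mkcond; apply: eq_bigr => x _; rewrite inE; case: (P x).
Qed.

Section ExtendByMax.

Variable n : nat.

Let widen : 'I_n -> 'I_n.+1 := widen_ord (leqnSn n).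

Let widen_inj : injective widen.
Proof. by move=> i j eq_ij; apply: val_inj; exact: (congr1 val eq_ij). Qed.

Let widen_neq_max i : (widen i == ord_max) = false.
Proof. by apply/negbTE; rewrite -val_eqE /= neq_ltn ltn_ord. Qed.

Let max_notin_widen (B : {set 'I_n}) : ord_max \notin widen @: B.
Proof. by apply/imsetP => -[i _] /eqP; rewrite eq_sym widen_neq_max. Qed.

Definition extend_max (p : {set 'I_n} * bool) : {set 'I_n.+1} :=
  if p.2 then ord_max |: widen @: p.1 else widen @: p.1.

Lemma extend_max_bij : bijective extend_max.
Proof.
exists (fun A : {set 'I_n.+1} => ([set i | widen i \in A], ord_max \in A)).
  case=> B [] /=; rewrite /extend_max /=; congr pair.
  - by apply/setP => i; rewrite !inE widen_neq_max mem_imset.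
  - by rewrite !inE eqxx.
  - by apply/setP => i; rewrite !inE mem_imset.
  - exact/negbTE/max_notin_widen.
move=> A; apply/setP => x; rewrite /extend_max /=.
have [lt_xn | ge_xn] := ltnP x n.
  have -> : x = widen (Ordinal lt_xn) by apply: val_inj.
  by case: ifP => _; rewrite ?inE ?widen_neq_max /= mem_imset ?inE.
have -> : x = ord_max by apply/val_inj/eqP; rewrite eqn_leq -ltnS ltn_ord.
by case: ifP => _; [rewrite !inE eqxx | exact/negbTE/max_notin_widen].
Qed.

Lemma card_extend_max p : #|extend_max p| = #|p.1| + p.2.
Proof.
case: p => B [];
  by rewrite /extend_max ?cardsU1 ?max_notin_widen card_imset // addnC.
Qed.

Lemma subset_sum_extend_max p :
  subset_sum (extend_max p) = subset_sum p.1 + p.2 * n.+1.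
Proof.
have sum_widen : \sum_(i in widen @: p.1) i.+1 = \sum_(i in p.1) i.+1.
  by rewrite big_imset //; move=> i j _ _ /widen_inj.
case: p sum_widen => B [] /= sum_widen; rewrite /extend_max /subset_sum /=.
  by rewrite big_setU1 ?max_notin_widen //= sum_widen mul1n addnC.
by rewrite sum_widen addn0.
Qed.

Lemma parity_cntS k b :
  parity_cnt n.+1 k b =
    parity_cnt n k b + (if k is k'.+1 then parity_cnt n k' (b (+) odd n.+1) else 0).
Proof.
rewrite /parity_cnt !card_set_sum (reindex extend_max); last first.
  exact/onW_bij/extend_max_bij.
rewrite -(pair_bigA _ (fun B top => [&& #|extend_max (B, top)| == k
                        & odd (subset_sum (extend_max (B, top))) == b] : nat)).
under eq_bigr => B _ do rewrite big_bool.
rewrite big_split addnC /=; congr addn; last first.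
  by apply: eq_bigr => B _; rewrite card_extend_max subset_sum_extend_max /= !addn0.
case: k => [|k]; first by rewrite big1 // => B _; rewrite card_extend_max addn1.
rewrite card_set_sum; apply: eq_bigr => B _.
rewrite card_extend_max subset_sum_extend_max mul1n addn1 eqSS oddD /=.
by case: (odd (subset_sum B)); case: (odd n); case: b.
Qed.

End ExtendByMax.

Lemma parity_cnt0 k b : parity_cnt 0 k b = (k == 0) && ~~ b.
Proof.
rewrite /parity_cnt card_set_sum (big_pred1 set0) => [|A]; last first.
  by symmetry; apply/eqP/setP => -[].
by rewrite cards0 /subset_sum big_set0; case: k; case: b.
Qed.

Lemma parity_cnt_compl n k b : parity_cnt n k b + parity_cnt n k (~~ b) = 'C(n, k).
Proof.
rewrite /parity_cnt !card_set_sum -big_split -[in RHS](card_ord n) -card_draws.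
rewrite card_set_sum; apply: eq_bigr => A _.
by case: (#|A| == k); case: (odd _); case: b.
Qed.

Lemma parity_cntSS n k b :
  parity_cnt n.+2 k b =
    parity_cnt n k b + (if k is k'.+1 then 'C(n, k') else 0)
    + (if k is k''.+2 then parity_cnt n k'' (~~ b) else 0).
Proof.
case: k => [|k]; first by rewrite !parity_cntS !addn0.
rewrite !parity_cntS /= !negbK -(parity_cnt_compl n k (b (+) ~~ odd n)) -!addnA.
congr (_ + (_ + (_ + _))); first by rewrite addbN negbK.
by case: k => [|k] //; rewrite addbN addbK.
Qed.

Definition losanitsch_parity k := (k %% 4 == 1) || (k %% 4 == 2).

Lemma losanitsch_paritySS k : losanitsch_parity k.+2 = ~~ losanitsch_parity k.
Proof.
rewrite /losanitsch_parity -addn2 -modnDml.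
by have := ltn_pmod k (isT : 0 < 4); case: (k %% 4) => [|[|[|[|m]]]].
Qed.

Lemma losanitsch_parity_cnt n k :
  losanitsch n k = parity_cnt n k (losanitsch_parity k).
Proof.
elim/ltn_ind: n k => -[|[|n]] IHn k.
- by rewrite parity_cnt0; case: k.
- by case: k => [|[|k]]; rewrite parity_cntS !parity_cnt0.
rewrite parity_cntSS /= IHn //; case: k => [|[|k]] //.
by rewrite IHn // losanitsch_paritySS negbK.
Qed.

Theorem mainTheorem3 (n k : nat) :
  ((k %% 4 == 0) || (k %% 4 == 3) -> losanitsch n k = e_cnt n k) /\
  ((k %% 4 == 1) || (k %% 4 == 2) -> losanitsch n k = o_cnt n k).
Proof.
rewrite losanitsch_parity_cnt /parity_cnt /losanitsch_parity; split=> k_class.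
  have -> : (k %% 4 == 1) || (k %% 4 == 2) = false.
    by case/orP: k_class => /eqP ->.
  by apply: eq_card => A; rewrite !inE eqbF_neg.
by rewrite k_class; apply: eq_card => A; rewrite !inE eqb_id.
Qed.
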